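(* Consider $\Gamma_T(p,q)$, let $\sigma^*_{p,q}$, $\tau^*_{p,q}$ be security strategies of players 1 and 2, and $x^*_{p,q}$, $y^*_{p,q}$ their realization plans. Then $\mu^*\in\mathbb R^{|K|}$ with $\mu^{*k}=-w_{k,0}(y^*_{p,q})$ for all $k\in K$ is an optimal solution of $\min_{\mu\in\mathbb R^{|K|}}\{\tilde V^1_T(\mu,q)-p^T\mu\}$, and $\nu^*\in\mathbb R^{|L|}$ with $\nu^{*l}=-u_{l,0}(x^*_{p,q})$ for all $l\in L$ is an optimal solution of $\max_{\nu\in\mathbb R^{|L|}}\{\tilde V^2_T(p,\nu)-q^T\nu\}$.
   Context: Setting: nonempty finite type sets $K,L$, action sets $A,B$, payoff $M:K\times L\times A\times B\to\mathbb R$, $p\in\Delta(K),q\in\Delta(L)$ with positive entries. In $\Gamma_T(p,q)$, $k\sim p$, $l\sim q$ are drawn independently and told privately to players 1 and 2; for $T$ stages both choose actions simultaneously, publicly announced; behavior strategies depend on own type and both action histories; payoff $\gamma_T=\mathbb E[\sum_{t=1}^TM(k,l,a_t,b_t)]$ to player 1 (maximizer); value $V_T(p,q)$; security strategies attain $\max_\sigma\min_\tau\gamma_T$ (player 1) resp. $\min_\tau\max_\sigma\gamma_T$ (player 2). The realization plan of $\sigma$ is $x^{a_t}_{k,h^A_t,h^B_t}=p^k\prod_{s=1}^t\sigma^{a_s}_s(k,h^A_s,h^B_s)$ (similarly for $\tau$ with $q$). For $x$ the realization plan of $\sigma$: $u_{l,0}(x)=\min_{\tau(l)}\sum_kp^k\mathbb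 E_{\sigma,\tau(l)}[\sum_{s=1}^TM(k,l,a_s,b_s)\mid k,l]$ (minimum over strategies of player 2 of type $l$); for $y$ the realization plan of $\tau$: $w_{k,0}(y)=\max_{\sigma(k)}\sum_lq^l\mathbb E_{\sigma(k),\tau}[\sum_{s=1}^TM\mid k,l]$. Dual games: in $\tilde\Gamma^1_T(\mu,q)$ ($\mu\in\mathbb R^{|K|}$) player 1 chooses his own type $k$ (by a distribution of his choice, hidden from player 2), nature draws $l\sim q$ and tells player 2, $T$ stages are played, payoff to player 1 $\mathbb E[\mu^k+\sum_{t=1}^TM(k,l,a_t,b_t)]$, value $\tilde V^1_T(\mu,q)$. In $\tilde\Gamma^2_T(p,\nu)$ ($\nu\in\mathbb R^{|L|}$) nature draws $k\sim p$ and tells player 1, player 2 chooses $l$ himself, payoff $\mathbb E[\nu^l+\sum_{t=1}^TM]$, value $\tilde V^2_T(p,\nu)$. *)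

From HB Require Import structures.
From mathcomp Require Import all_boot all_order all_algebra.
From mathcomp Require Import boolp classical_sets reals.
Set Implicit Arguments. Unset Strict Implicit. Unset Printing Implicit Defensive.
Import Order.TTheory GRing.Theory Num.Theory.
Local Open Scope ring_scope.
Local Open Scope classical_set_scope.

Section RepeatedGame.
Variables (R : realType) (K L A B : finType).

Definition is_dist (I : finType) (f : I -> R) :=
  (forall i, 0 <= f i) /\ \sum_(i : I) f i = 1.

(* Behavior strategy of one type of player 1 (resp. 2): at each stage, given
   the action history hA of player 1 and hB of player 2 (both of length t-1),
   a probability distribution on A (resp. B). *)
Definition bstrat1 := seq A -> seq B -> A -> R.
Definition bstrat2 := seq A -> seq B -> B -> R.

Definition valid1 (s : bstrat1) := forall hA hB, is_dist (s hA hB).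
Definition valid2 (t : bstrat2) := forall hA hB, is_dist (t hA hB).

Definition strat1 (sigma : K -> bstrat1) := forall k, valid1 (sigma k).
Definition strat2 (tau : L -> bstrat2) := forall l, valid2 (tau l).

Fixpoint cont_pay (m : A -> B -> R) (s : bstrat1) (t : bstrat2) (n : nat)
    (hA : seq A) (hB : seq B) : R :=
  match n with
  | 0 => 0
  | n'.+1 => \sum_(a : A) \sum_(b : B)
       s hA hB a * t hA hB b * (m a b + cont_pay m s t n' (rcons hA a) (rcons hB b))
  end.

Definition cpay (m : A -> B -> R) (s : bstrat1) (t : bstrat2) (T : nat) : R :=
  cont_pay m s t T [::] [::].

Definition gammaT (p : K -> R) (q : L -> R) (M : K -> L -> A -> B -> R) (T : nat)
    (sigma : K -> bstrat1) (tau : L -> bstrat2) : R :=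
  \sum_(k : K) \sum_(l : L) p k * q l * cpay (M k l) (sigma k) (tau l) T.

Definition guar1 p q M T sigma : R :=
  inf [set r | exists tau, strat2 tau /\ r = gammaT p q M T sigma tau].
Definition guar2 p q M T tau : R :=
  sup [set r | exists sigma, strat1 sigma /\ r = gammaT p q M T sigma tau].

Definition security1 p q M T (sigma : K -> bstrat1) :=
  strat1 sigma /\
  guar1 p q M T sigma = sup [set r | exists s, strat1 s /\ r = guar1 p q M T s].
Definition security2 p q M T (tau : L -> bstrat2) :=
  strat2 tau /\
  guar2 p q M T tau = inf [set r | exists t, strat2 t /\ r = guar2 p q M T t].

(* realization plans (recorded for reference; u and w below are defined, as in
   the paper, through the strategies, and depend on them only via these plans) *)
Definition real_plan1 (p : K -> R) (sigma : K -> bstrat1) (k : K)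
    (hA : seq A) (hB : seq B) (a : A) : R :=
  p k * (\prod_(s < size hA) sigma k (take s hA) (take s hB) (nth a hA s))
      * sigma k hA hB a.
Definition real_plan2 (q : L -> R) (tau : L -> bstrat2) (l : L)
    (hA : seq A) (hB : seq B) (b : B) : R :=
  q l * (\prod_(s < size hB) tau l (take s hA) (take s hB) (nth b hB s))
      * tau l hA hB b.

(* u_{l,0}(x) for x the realization plan of sigma *)
Definition u_l0 (p : K -> R) M T (sigma : K -> bstrat1) (l : L) : R :=
  inf [set r | exists t, valid2 t /\
        r = \sum_(k : K) p k * cpay (M k l) (sigma k) t T].
(* w_{k,0}(y) for y the realization plan of tau *)
Definition w_k0 (q : L -> R) M T (tau : L -> bstrat2) (k : K) : R :=
  sup [set r | exists s, valid1 s /\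
        r = \sum_(l : L) q l * cpay (M k l) s (tau l) T].

(* Dual game ~Gamma^1_T(mu,q): player 1 picks his type with a distribution pi
   (hidden), then plays sigma; value = max min (the game has a value). *)
Definition pay_dual1 (mu : K -> R) (q : L -> R) M T (pi : K -> R)
    (sigma : K -> bstrat1) (tau : L -> bstrat2) : R :=
  \sum_(k : K) pi k * (mu k + \sum_(l : L) q l * cpay (M k l) (sigma k) (tau l) T).
Definition Vdual1 (mu : K -> R) (q : L -> R) M T : R :=
  sup [set r | exists pi sigma, is_dist pi /\ strat1 sigma /\
        r = inf [set g | exists tau, strat2 tau /\ g = pay_dual1 mu q M T pi sigma tau]].

Definition pay_dual2 (p : K -> R) (nu : L -> R) M T (sigma : K -> bstrat1)
    (rho : L -> R) (tau : L -> bstrat2) : R :=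
  \sum_(l : L) rho l * (nu l + \sum_(k : K) p k * cpay (M k l) (sigma k) (tau l) T).
Definition Vdual2 (p : K -> R) (nu : L -> R) M T : R :=
  sup [set r | exists sigma, strat1 sigma /\
        r = inf [set g | exists rho tau, is_dist rho /\ strat2 tau /\
                   g = pay_dual2 p nu M T sigma rho tau]].

End RepeatedGame.

From HB Require Import structures.
From mathcomp Require Import all_boot all_order all_algebra.
From mathcomp Require Import boolp classical_sets reals.
From mathcomp Require Import ring lra.
Import Order.TTheory GRing.Theory Num.Theory.
Local Open Scope ring_scope.
Set Implicit Arguments. Unset Strict Implicit. Unset Printing Implicit Defensive.

(* Write w and u for the vectors of type-wise guarantees [w_k0 q M T tau_s]
   and [u_l0 p M T sigma_s].  For every mu, player 1 may draw his type from p
   and play sigma_s, so Vdual1(mu) - p.mu >= guar1(sigma_s); against tau_s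
   every type k gets at most w_k, so Vdual1(-w) <= 0, while
   p.w <= guar2(tau_s).  Symmetrically Vdual2(nu) - q.nu <= guar2(tau_s),
   Vdual2(-u) >= 0 and guar1(sigma_s) <= q.u.  Both claims then follow from
   the minimax inequality guar2(tau_s) <= guar1(sigma_s).  It is reduced to
   Ville's theorem for the finite matrix game of pure strategies: a mixture
   of pure strategies is realised by a behaviour strategy (Kuhn), and a best
   reply can be purified one history at a time since the payoff is affine in
   the move played at a single history.  Ville's theorem follows from
   Gordan's alternative, proved by Fourier-Motzkin elimination. *)

(** * Gordan's and Ville's alternatives *)

Section Gordan.
Variable R : realFieldType.

Lemma exists_strict_separator (I : finType) (P Q : pred I) (f g : I -> R) :
  (forall i j, P i -> Q j -> f i < g j) ->
  exists t, (forall i, P i -> f i < t) /\ (forall j, Q j -> t < g j).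
Proof.
move=> fg.
case: (pickP P) => [i0 Pi0|P0]; case: (pickP Q) => [j0 Qj0|Q0].
- have [i1 Pi1 maxf] := @arg_maxP _ R I i0 P f Pi0.
  have [j1 Qj1 ming] := @arg_minP _ R I j0 Q g Qj0.
  have lt_fg := fg _ _ Pi1 Qj1.
  exists ((f i1 + g j1) / 2); split.
    by move=> i Pi; apply: le_lt_trans (maxf i Pi) _; lra.
  by move=> j Qj; apply: lt_le_trans (ming j Qj); lra.
- have [i1 Pi1 maxf] := @arg_maxP _ R I i0 P f Pi0.
  exists (f i1 + 1); split => [i Pi|j]; last by rewrite Q0.
  by apply: le_lt_trans (maxf i Pi) _; lra.
- have [j1 Qj1 ming] := @arg_minP _ R I j0 Q g Qj0.
  exists (g j1 - 1); split => [i|j Qj]; first by rewrite P0.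
  by apply: lt_le_trans (ming j Qj); lra.
- by exists 0; split => [i|j]; rewrite ?P0 ?Q0.
Qed.

Definition gordan_solution (C J : finType) (S : pred J) (a : J -> C -> R)
    (x : C -> R) :=
  forall j, S j -> 0 < \sum_c a j c * x c.

Definition gordan_certificate (C J : finType) (S : pred J) (a : J -> C -> R)
    (mu : J -> R) :=
  [/\ forall j, 0 <= mu j, forall j, ~~ S j -> mu j = 0,
      exists j, 0 < mu j & forall c, \sum_j mu j * a j c = 0].

Section FourierMotzkin.
Variables (n : nat) (J : finType) (S : pred J) (a : J -> 'I_n.+1 -> R).

Let c j := a j ord0.
Let a' j r := a j (lift ord0 r).

(* One Fourier-Motzkin step on the first coordinate: keep the rows with
   [c j = 0] and combine each row with [c > 0] with each row with [c < 0]. *)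
Definition fm_support : pred (J + J * J) := fun j' =>
  match j' with
  | inl j => S j && (c j == 0)
  | inr (i, j) => [&& S i, S j, 0 < c i & c j < 0]
  end.

Definition fm_rows (j' : J + J * J) (r : 'I_n) : R :=
  match j' with
  | inl j => a' j r
  | inr (i, j) => c i * a' j r - c j * a' i r
  end.

Lemma fm_lift_solution x' : gordan_solution fm_support fm_rows x' ->
  exists x, gordan_solution S a x.
Proof.
move=> sol'.
pose e j := \sum_r a' j r * x' r.
(* The combined rows say that each lower bound [- e i / c i] on the first
   coordinate lies below each upper bound [- e j / c j]. *)
have sep i j : S i && (0 < c i) -> S j && (c j < 0) -> - e i / c i < - e j / c j.
  move=> /andP[Si ci] /andP[Sj cj].
  have := sol' (inr (i, j)); rewrite /= Si Sj ci cj => /(_ isT).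
  have -> : \sum_r fm_rows (inr (i, j)) r * x' r = c i * e j - c j * e i.
    by rewrite /e !big_distrr -sumrB; apply: eq_bigr => r _ /=; ring.
  have -> : c i * e j - c j * e i = (c i * - c j) * (- e j / c j - - e i / c i).
    by field; rewrite gt_eqF ?lt_eqF.
  by rewrite pmulr_rgt0 ?subr_gt0 // mulr_gt0 // oppr_gt0.
have [t [above below]] := exists_strict_separator sep.
exists (fun r => if unlift ord0 r is Some r' then x' r' else t) => j Sj.
rewrite big_ord_recl unlift_none -/(c j).
under eq_bigr do rewrite liftK.
rewrite -/(e j); case: (ltrgt0P (c j)) => cj.
- have := above j; rewrite Sj cj => /(_ isT).
  have -> : c j * t + e j = c j * (t - - e j / c j) by field; rewrite gt_eqF.
  by rewrite -subr_gt0 => ?; apply: mulr_gt0.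
- have := below j; rewrite Sj cj => /(_ isT).
  have -> : c j * t + e j = - c j * (- e j / c j - t) by field; rewrite lt_eqF.
  by rewrite -subr_gt0 => ?; rewrite mulr_gt0 // oppr_gt0.
- by have := sol' (inl j); rewrite /= Sj cj eqxx mul0r add0r; apply.
Qed.

Section LiftCertificate.
Variable mu' : J + J * J -> R.
Hypothesis cert' : gordan_certificate fm_support fm_rows mu'.

Definition fm_lift (j : J) : R :=
  mu' (inl j) + \sum_q mu' (inr (j, q)) * - c q + \sum_p mu' (inr (p, j)) * c p.

Let mu'_ge0 : forall j', 0 <= mu' j' := let: And4 ge0 _ _ _ := cert' in ge0.
Let mu'_support : forall j', ~~ fm_support j' -> mu' j' = 0 :=
  let: And4 _ supp _ _ := cert' in supp.

Lemma fm_pair_weights_ge0 i j :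
  0 <= mu' (inr (i, j)) * - c j /\ 0 <= mu' (inr (i, j)) * c i.
Proof.
case Sij: (fm_support (inr (i, j))); last by rewrite mu'_support ?Sij // !mul0r.
move: Sij => /and4P[_ _ ci cj].
by rewrite !mulr_ge0 // ?oppr_ge0 ltW.
Qed.

Lemma fm_lift_ge0 j : 0 <= fm_lift j.
Proof.
rewrite /fm_lift !addr_ge0 ?mu'_ge0 //; apply: sumr_ge0 => i _.
  exact: (fm_pair_weights_ge0 j i).1.
exact: (fm_pair_weights_ge0 i j).2.
Qed.

Lemma fm_lift_support j : ~~ S j -> fm_lift j = 0.
Proof.
move=> Sj; rewrite /fm_lift mu'_support /= ?(negbTE Sj) // add0r.
by rewrite !big1 ?addr0 // => i _; rewrite mu'_support ?mul0r //= (negbTE Sj) ?andbF.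
Qed.

Lemma fm_lift_pos : exists j, 0 < fm_lift j.
Proof.
have [_ _ [[j|[i j]] pos] _] := cert'.
  exists j; apply: lt_le_trans pos _; rewrite /fm_lift -addrA lerDl.
  by apply: addr_ge0; apply: sumr_ge0 => i _; case: (fm_pair_weights_ge0 j i);
    case: (fm_pair_weights_ge0 i j).
have : fm_support (inr (i, j)).
  by apply/negPn/negP => Sij; move: pos; rewrite mu'_support ?ltxx.
move=> /and4P[_ _ _ cj]; exists i.
have pos_ij : 0 < mu' (inr (i, j)) * - c j by rewrite mulr_gt0 // oppr_gt0.
apply: lt_le_trans pos_ij _; rewrite /fm_lift -addrA addrC -addrA ler_wpDr //.
  rewrite addr_ge0 ?mu'_ge0 //; apply: sumr_ge0 => k _.
  by case: (fm_pair_weights_ge0 k i).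
rewrite (bigD1 j) //= lerDl; apply: sumr_ge0 => k _.
by case: (fm_pair_weights_ge0 i k).
Qed.

Lemma fm_lift_combination (v : J -> R) :
  \sum_j fm_lift j * v j = \sum_j mu' (inl j) * v j +
     \sum_i \sum_j mu' (inr (i, j)) * (c i * v j - c j * v i).
Proof.
rewrite /fm_lift; under eq_bigr do rewrite !mulrDl !big_distrl.
rewrite !big_split /= -addrA; congr (_ + _).
rewrite [X in _ + X]exchange_big -big_split /=; apply: eq_bigr => i _.
rewrite -big_split /=; apply: eq_bigr => j _; ring.
Qed.

End LiftCertificate.

Lemma fm_lift_certificate mu' : gordan_certificate fm_support fm_rows mu' ->
  exists mu, gordan_certificate S a mu.
Proof.
move=> cert'; exists (fm_lift mu'); split.
- exact: fm_lift_ge0.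
- exact: fm_lift_support.
- exact: fm_lift_pos.
have [_ supp' _ comb'] := cert'.
move=> r; rewrite fm_lift_combination; case: (unliftP ord0 r) => [r'|] ->.
  rewrite pair_big; apply: etrans (comb' r'); rewrite big_sumType.
  by congr (_ + _); apply: eq_bigr => -[i j].
rewrite big1 => [|j _]; last first.
  case Sj: (fm_support (inl j)); last by rewrite supp' ?Sj ?mul0r.
  by move: Sj => /andP[_ /eqP cj]; rewrite /c in cj; rewrite cj mulr0.
by rewrite add0r big1 // => i _; rewrite big1 // => j _; rewrite /c; ring.
Qed.

End FourierMotzkin.

Theorem gordan_alternative n (J : finType) (S : pred J) (a : J -> 'I_n -> R) :
  (exists x, gordan_solution S a x) \/ (exists mu, gordan_certificate S a mu).
Proof.
elim: n J S a => [|n IH] J S a.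
  case: (pickP S) => [j0 Sj0|S0]; last by left; exists (fun _ => 0) => j; rewrite S0.
  right; exists (fun j => (j == j0)%:R); split => [j|j|| [] //].
  - by rewrite ler0n.
  - by case: eqP => // ->; rewrite Sj0.
  - by exists j0; rewrite eqxx ltr01.
case: (IH _ (fm_support S a) (fm_rows a)) => [[x' sol']|[mu' cert']].
  by left; apply: fm_lift_solution sol'.
by right; apply: fm_lift_certificate cert'.
Qed.

Lemma gordan_alternative_fin (C J : finType) (S : pred J) (a : J -> C -> R) :
  (exists x, gordan_solution S a x) \/ (exists mu, gordan_certificate S a mu).
Proof.
have sum_enum_rank (F : 'I_#|C| -> R) : \sum_r F r = \sum_c F (enum_rank c).
  by rewrite (reindex enum_rank) //; apply: onW_bij; apply: enum_rank_bij.
case: (gordan_alternative S (fun j (r : 'I_#|C|) => a j (enum_val r)))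
  => [[x sol]|[mu cert]].
  left; exists (fun c => x (enum_rank c)) => j /sol; rewrite sum_enum_rank.
  by under eq_bigr do rewrite enum_rankK.
have [ge0 supp pos comb] := cert.
by right; exists mu; split => // c; rewrite -(enum_rankK c); apply: comb.
Qed.

End Gordan.

Section Distributions.
Variable R : realType.

Lemma sum_delta (I : finType) (F : I -> R) i0 : \sum_i (i == i0)%:R * F i = F i0.
Proof.
rewrite (bigD1 i0) //= eqxx mul1r big1 ?addr0 // => i /negbTE ->.
by rewrite mul0r.
Qed.

Lemma sum_mul_exchange (I J : finType) (d : I -> R) (w : J -> R) (X : I -> J -> R) :
  \sum_i d i * \sum_j w j * X i j = \sum_j w j * \sum_i d i * X i j.
Proof.
under eq_bigr do rewrite big_distrr; rewrite exchange_big; apply: eq_bigr => j _ /=.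
by rewrite big_distrr; apply: eq_bigr => i _; apply: mulrCA.
Qed.

Lemma sum_eq1_inhabited (I : finType) (f : I -> R) : \sum_i f i = 1 -> inhabited I.
Proof.
case: (pickP (fun _ : I => true)) => [i _ _|I0]; first exact: inhabits.
by rewrite big_pred0 // => /eqP; rewrite eq_sym oner_eq0.
Qed.

Lemma sum_dist_affine (I : finType) (d : I -> R) (u : R) (X : I -> R) :
  \sum_i d i = 1 -> \sum_i d i * (u + X i) = u + \sum_i d i * X i.
Proof.
move=> d_sum1; rewrite -[u in RHS]mul1r -d_sum1 big_distrl -big_split /=.
by apply: eq_bigr => i _; rewrite mulrDr.
Qed.

Lemma is_dist_normalize (I : finType) (w : I -> R) :
  (forall i, 0 <= w i) -> 0 < \sum_i w i -> is_dist (fun i => w i / \sum_i w i).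
Proof.
move=> ge0 pos; split => [i|]; first by rewrite divr_ge0 // ltW.
by rewrite -big_distrl /= mulfV // gt_eqF.
Qed.

Lemma sum_div (I : finType) (w G : I -> R) s :
  \sum_i w i / s * G i = (\sum_i w i * G i) / s.
Proof. by rewrite big_distrl; apply: eq_bigr => i _ /=; rewrite mulrAC. Qed.

Lemma norm_avg_le (I : finType) (w X : I -> R) C :
  is_dist w -> (forall i, `|X i| <= C) -> `|\sum_i w i * X i| <= C.
Proof.
move=> [w_ge0 w_sum1] XC; apply: le_trans (ler_norm_sum _ _ _) _.
rewrite -[leRHS]mul1r -w_sum1 big_distrl /=; apply: ler_sum => i _.
by rewrite normrM ger0_norm // ler_wpM2l.
Qed.

Lemma finite_bounded (I : finType) (f : I -> R) : exists C, forall i, `|f i| <= C.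
Proof.
exists (\sum_i `|f i|) => i.
by rewrite (bigD1 i) //= lerDl sumr_ge0.
Qed.

Theorem ville_alternative (I J : finType) (G : I -> J -> R) (lam : R) (j0 : J) :
  (exists x, is_dist x /\ forall j, lam <= \sum_i x i * G i j) \/
  (exists y, is_dist y /\ forall i, \sum_j y j * G i j < lam).
Proof.
(* The unit rows [inr j] force a solution to be positive and give a
   certificate its slack variables. *)
pose rows (ij : I + J) (j : J) : R :=
  match ij with inl i => lam - G i j | inr j' => (j == j')%:R end.
case: (gordan_alternative_fin predT rows) => [[z sol]|[mu [ge0 _ [ij1 pos1] comb]]].
  have z_gt0 j : 0 < z j.
    by have := sol (inr j) isT; rewrite /rows sum_delta.
  have sum_pos : 0 < \sum_j z j.
    by rewrite (bigD1 j0) //= ltr_wpDr // sumr_ge0 // => j _; apply: ltW.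
  right; exists (fun j => z j / \sum_j z j); split.
    by apply: is_dist_normalize => // j; apply: ltW.
  move=> i; rewrite sum_div ltr_pdivrMr // -subr_gt0.
  suff <- : \sum_j rows (inl i) j * z j = lam * \sum_j z j - \sum_j z j * G i j.
    exact: sol.
  by rewrite big_distrr -sumrB; apply: eq_bigr => j _ /=; ring.
have balance j : \sum_i mu (inl i) * G i j = lam * \sum_i mu (inl i) + mu (inr j).
  have := comb j; rewrite big_sumType /=.
  under [X in _ + X]eq_bigr do rewrite mulrC eq_sym; rewrite sum_delta.
  suff -> : \sum_i mu (inl i) * rows (inl i) j =
    lam * \sum_i mu (inl i) - \sum_i mu (inl i) * G i j by lra.
  by rewrite big_distrr -sumrB; apply: eq_bigr => i _ /=; ring.
have sum_pos : 0 < \sum_i mu (inl i).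
  rewrite lt_def sumr_ge0 ?andbT //; apply/eqP => sum0.
  have mu_inl0 i : mu (inl i) = 0 by apply: (psumr_eq0P _ sum0).
  have mu_inr0 j : mu (inr j) = 0.
    by have := balance j; rewrite sum0 mulr0 add0r big1 // => i _; rewrite mu_inl0 mul0r.
  by move: pos1; case: ij1 => [i|j]; rewrite ?mu_inl0 ?mu_inr0 ltxx.
left; exists (fun i => mu (inl i) / \sum_i mu (inl i)); split.
  exact: is_dist_normalize.
by move=> j; rewrite sum_div ler_pdivlMr // balance lerDl.
Qed.

End Distributions.

(** * Behaviour strategies *)

Section Strategies.
Variables (R : realType) (A B : finType).
Implicit Types (s : bstrat1 R A B) (t : bstrat2 R A B) (m : A -> B -> R).

Definition point_mass (a : A) (a' : A) : R := (a' == a)%:R.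

Lemma point_mass_dist a : is_dist (point_mass a).
Proof.
split=> [a'|]; first by rewrite ler0n.
by under eq_bigr do rewrite -[point_mass a _]mulr1; rewrite sum_delta.
Qed.

Lemma cont_payS m s t n hA hB : cont_pay m s t n.+1 hA hB =
  \sum_a s hA hB a * \sum_b t hA hB b *
    (m a b + cont_pay m s t n (rcons hA a) (rcons hB b)).
Proof.
apply: eq_bigr => a _; rewrite big_distrr.
by apply: eq_bigr => b _; apply: esym (mulrA _ _ _).
Qed.

Lemma cont_payN m s t n hA hB :
  cont_pay (fun a b => - m a b) s t n hA hB = - cont_pay m s t n hA hB.
Proof.
elim: n hA hB => [|n IH] hA hB /=; first by rewrite oppr0.
rewrite -sumrN; apply: eq_bigr => a _; rewrite -sumrN; apply: eq_bigr => b _.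
by rewrite IH -mulrN opprD.
Qed.

Lemma cont_pay_bound m s t C n hA hB : valid1 s -> valid2 t ->
  (forall a b, `|m a b| <= C) -> `|cont_pay m s t n hA hB| <= n%:R * C.
Proof.
move=> vs vt mC; elim: n hA hB => [|n IH] hA hB; first by rewrite normr0 mul0r.
rewrite cont_payS.
apply: norm_avg_le => // a; apply: norm_avg_le => // b.
rewrite -natr1 mulrDl mul1r addrC; apply: le_trans (ler_normD _ _) _; exact: lerD.
Qed.

Lemma cont_pay_ext m s s' t n hA hB :
  (forall hA' hB', size hA' = size hB' -> (size hA' < size hA + n)%N ->
     s hA' hB' = s' hA' hB') ->
  size hA = size hB -> cont_pay m s t n hA hB = cont_pay m s' t n hA hB.
Proof.
elim: n hA hB => // n IH hA hB eq_ss' eq_size /=.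
rewrite eq_ss' // ?addnS ?ltnS ?leq_addr //.
apply: eq_bigr => a _; apply: eq_bigr => b _; congr (_ * (_ + _)).
apply: IH => [hA' hB' eq_size' lt_size|]; last by rewrite !size_rcons eq_size.
by apply: eq_ss' => //; rewrite size_rcons addSnnS in lt_size.
Qed.

Section KuhnMixture.
Variables (I : finType) (x : I -> R) (ss : I -> bstrat1 R A B) (s0 : bstrat1 R A B).

(* [x i] times the probability that [ss i] plays [hA] against [hB]. *)
Fixpoint kuhn_weight_rev i (rA : seq A) (rB : seq B) : R :=
  match rA, rB with
  | a :: rA', b :: rB' => kuhn_weight_rev i rA' rB' * ss i (rev rA') (rev rB') a
  | _, _ => x i
  end.

Definition kuhn_weight i hA hB := kuhn_weight_rev i (rev hA) (rev hB).

Lemma kuhn_weight_rcons i hA hB a b :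
  kuhn_weight i (rcons hA a) (rcons hB b) = kuhn_weight i hA hB * ss i hA hB a.
Proof. by rewrite /kuhn_weight !rev_rcons /= !revK. Qed.

(* The conditional law of the next move given the history; [s0] is an
   arbitrary choice on histories of probability zero. *)
Definition kuhn_mix : bstrat1 R A B := fun hA hB a =>
  let D := \sum_i kuhn_weight i hA hB in
  if D == 0 then s0 hA hB a else (\sum_i kuhn_weight i hA hB * ss i hA hB a) / D.

Hypotheses (x_dist : is_dist x) (ss_valid : forall i, valid1 (ss i))
  (s0_valid : valid1 s0).

Lemma kuhn_weight_ge0 i hA hB : 0 <= kuhn_weight i hA hB.
Proof.
rewrite /kuhn_weight; elim: (rev hA) (rev hB) => [|a rA IH] [|b rB] /=;
  try exact: x_dist.1.
by rewrite mulr_ge0 //; case: (ss_valid i (rev rA) (rev rB)).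
Qed.

Lemma kuhn_mix_valid : valid1 kuhn_mix.
Proof.
move=> hA hB; rewrite /kuhn_mix; set D := \sum_i _.
have [_|D0] := eqVneq D 0; first exact: s0_valid.
have D_gt0 : 0 < D by rewrite lt_def D0 sumr_ge0 // => i _; apply: kuhn_weight_ge0.
split=> [a|].
  apply: divr_ge0 (ltW D_gt0); apply: sumr_ge0 => i _.
  by rewrite mulr_ge0 ?kuhn_weight_ge0 //; case: (ss_valid i hA hB).
rewrite -big_distrl /= exchange_big /=; transitivity (D / D); last exact: mulfV.
congr (_ / _); apply: eq_bigr => i _.
by rewrite -big_distrr /=; case: (ss_valid i hA hB) => _ ->; rewrite mulr1.
Qed.

Lemma kuhn_mix_cont_pay m t n hA hB :
  (\sum_i kuhn_weight i hA hB) * cont_pay m kuhn_mix t n hA hB =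
  \sum_i kuhn_weight i hA hB * cont_pay m (ss i) t n hA hB.
Proof.
elim: n hA hB => [|n IH] hA hB /=; first by rewrite mulr0 big1 // => i _; rewrite mulr0.
set D := \sum_i _; have [D0|D0] := eqVneq D 0.
  have W0 i : kuhn_weight i hA hB = 0.
    by apply: (psumr_eq0P (fun j _ => kuhn_weight_ge0 j hA hB) D0).
  by rewrite D0 mul0r big1 // => i _; rewrite W0 mul0r.
have step a b : D * (kuhn_mix hA hB a * t hA hB b *
      (m a b + cont_pay m kuhn_mix t n (rcons hA a) (rcons hB b))) =
    \sum_i kuhn_weight i hA hB * (ss i hA hB a * t hA hB b *
      (m a b + cont_pay m (ss i) t n (rcons hA a) (rcons hB b))).
  have := IH (rcons hA a) (rcons hB b).
  under eq_bigr do rewrite kuhn_weight_rcons.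
  under [RHS]eq_bigr do rewrite kuhn_weight_rcons.
  rewrite /kuhn_mix -/D (negbTE D0); set N := \sum_i _ * _ => IHab.
  set Cab := cont_pay m kuhn_mix t n _ _ in IHab *.
  have -> : D * (N / D * t hA hB b * (m a b + Cab)) =
      t hA hB b * (N * m a b) + t hA hB b * (N * Cab) by field.
  rewrite IHab /N big_distrl /= !big_distrr -big_split /=.
  by apply: eq_bigr => i _; ring.
rewrite big_distrr /=; symmetry.
transitivity (\sum_i \sum_a \sum_b kuhn_weight i hA hB * (ss i hA hB a * t hA hB b *
    (m a b + cont_pay m (ss i) t n (rcons hA a) (rcons hB b)))).
  by apply: eq_bigr => i _; rewrite big_distrr; apply: eq_bigr => a _; rewrite big_distrr.
rewrite exchange_big; apply: eq_bigr => a _; rewrite exchange_big big_distrr.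
by apply: eq_bigr => b _; apply/esym/step.
Qed.

Lemma kuhn_mix_cpay m t n :
  cpay m kuhn_mix t n = \sum_i x i * cpay m (ss i) t n.
Proof. by have := kuhn_mix_cont_pay m t n [::] [::]; rewrite /= (proj2 x_dist) mul1r. Qed.

End KuhnMixture.

Definition override s (h : seq A * seq B) (d : A -> R) : bstrat1 R A B :=
  fun hA hB => if (hA == h.1) && (hB == h.2) then d else s hA hB.

Lemma override_valid s h d : valid1 s -> is_dist d -> valid1 (override s h d).
Proof. by move=> vs dd hA hB; rewrite /override; case: ifP. Qed.

Lemma override_id s h : override s h (s h.1 h.2) = s.
Proof.
apply/funext => hA; apply/funext => hB; rewrite /override.
by case: eqP => [->|] //=; case: eqP => [->|].
Qed.

Lemma cont_pay_override_later m s t h d n hA hB : (size h.1 < size hA)%N ->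
  cont_pay m (override s h d) t n hA hB = cont_pay m s t n hA hB.
Proof.
elim: n hA hB => // n IH hA hB lt_h /=.
have -> : override s h d hA hB = s hA hB.
  by rewrite /override; case: eqP => [eq_h|] //=; rewrite eq_h ltnn in lt_h.
apply: eq_bigr => a _; apply: eq_bigr => b _.
by rewrite IH // size_rcons ltnS ltnW.
Qed.

Lemma cont_pay_override m s t h d n hA hB : \sum_a d a = 1 ->
  cont_pay m (override s h d) t n hA hB =
  \sum_a d a * cont_pay m (override s h (point_mass a)) t n hA hB.
Proof.
move=> d_sum1; elim: n hA hB => [|n IH] hA hB.
  by rewrite big1 // => a _; rewrite mulr0.
rewrite cont_payS; under [RHS]eq_bigr do rewrite cont_payS.
rewrite {1}/override; under [RHS]eq_bigr do rewrite {1}/override.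
case: ifP => [/andP[/eqP eq_hA _]|_].
  have later a : (size h.1 < size (rcons hA a))%N by rewrite eq_hA size_rcons.
  apply: eq_bigr => a _; rewrite /point_mass sum_delta; congr (_ * _).
  by apply: eq_bigr => b _; rewrite !cont_pay_override_later.
rewrite [RHS]sum_mul_exchange; apply: eq_bigr => a _; congr (_ * _).
rewrite [RHS]sum_mul_exchange; apply: eq_bigr => b _; congr (_ * _).
by rewrite IH sum_dist_affine.
Qed.

Section Purification.
Variables (J : finType) (c : J -> R) (mm : J -> A -> B -> R) (tt : J -> bstrat2 R A B)
  (n : nat).

Definition weighted_pay s := \sum_j c j * cpay (mm j) s (tt j) n.

Lemma weighted_pay_override s h d : \sum_a d a = 1 ->
  weighted_pay (override s h d) = \sum_a d a * weighted_pay (override s h (point_mass a)).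
Proof.
move=> d_sum1; rewrite /weighted_pay /cpay.
under eq_bigr do rewrite (cont_pay_override _ _ _ _ _ _ _ d_sum1).
by rewrite sum_mul_exchange.
Qed.

(* The payoff is affine in the distribution played at [h], so the best pure
   move there does at least as well. *)
Lemma exists_pure_override s h : valid1 s ->
  exists a, weighted_pay s <= weighted_pay (override s h (point_mass a)).
Proof.
move=> vs; have [d_ge0 d_sum1] := vs h.1 h.2.
have := weighted_pay_override s h d_sum1; rewrite override_id => ->.
have [a0] := sum_eq1_inhabited d_sum1.
have [a1 _ max_a1] := @arg_maxP _ R A a0 xpredT
  (fun a => weighted_pay (override s h (point_mass a))) isT.
exists a1; rewrite -[leRHS]mul1r -d_sum1 big_distrl /=.
by apply: ler_sum => a _; apply: ler_wpM2l => //; apply: max_a1.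
Qed.

Lemma purify (hs : seq (seq A * seq B)) s : valid1 s ->
  exists s', [/\ valid1 s', weighted_pay s <= weighted_pay s' &
    forall h, h \in hs -> exists a, s' h.1 h.2 = point_mass a].
Proof.
elim: hs s => [|h hs IH] s vs; first by exists s; split.
have [s1 [vs1 le_s1 pure_s1]] := IH s vs.
have [a le_a] := exists_pure_override h vs1.
exists (override s1 h (point_mass a)); split.
- exact/override_valid/point_mass_dist.
- exact: le_trans le_a.
move=> h'; rewrite in_cons => /orP[/eqP ->|h'_hs].
  by exists a; rewrite /override !eqxx.
by rewrite /override; case: ifP => _; [exists a | apply: pure_s1].
Qed.

End Purification.

End Strategies.

Section Swap.
Variables (R : realType) (A B : finType).

Definition swap1 (t : bstrat2 R A B) : bstrat1 R B A := fun hB hA => t hA hB.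
Definition swap2 (s : bstrat1 R A B) : bstrat2 R B A := fun hB hA => s hA hB.

Lemma valid1_swap1 t : valid2 t -> valid1 (swap1 t).
Proof. by move=> vt hB hA; apply: vt. Qed.

Lemma valid2_swap2 s : valid1 s -> valid2 (swap2 s).
Proof. by move=> vs hB hA; apply: vs. Qed.

Lemma cont_pay_swap m s t n hA hB :
  cont_pay m s t n hA hB = cont_pay (fun b a => m a b) (swap1 t) (swap2 s) n hB hA.
Proof.
elim: n hA hB => // n IH hA hB /=.
rewrite exchange_big /=; apply: eq_bigr => b _; apply: eq_bigr => a _.
by rewrite IH [s _ _ _ * _]mulrC.
Qed.

End Swap.

(** * Pure strategies of the repeated game *)

Definition short_seqs (X : finType) (T : nat) : seq (seq X) :=
  flatten [seq [seq val w | w : n.-tuple X] | n <- iota 0 T].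

Lemma mem_short_seqs (X : finType) T (w : seq X) : (size w < T)%N -> w \in short_seqs X T.
Proof.
move=> lt_wT; apply/flatten_mapP; exists (size w); first by rewrite mem_iota.
by apply/mapP; exists (in_tuple w); rewrite ?mem_enum.
Qed.

Section PureStrategies.
Variables (R : realType) (K L A B : finType) (a0 : A) (T : nat).

Definition histories : seq (seq A * seq B) :=
  [seq (hA, hB) | hA <- short_seqs A T, hB <- short_seqs B T].

Lemma mem_histories hA hB : (size hA < T)%N -> (size hB < T)%N -> (hA, hB) \in histories.
Proof. by move=> ltA ltB; apply: allpairs_f; apply: mem_short_seqs. Qed.

Definition pure1 := {ffun K * seq_sub histories -> A}.

(* [a0] is only played on histories that cannot occur within [T] stages. *)
Definition play1 (c : pure1) : K -> bstrat1 R A B := fun k hA hB =>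
  point_mass R (if insub (hA, hB) is Some h then c (k, h) else a0).

Lemma play1_strat c : strat1 (play1 c).
Proof. by move=> k hA hB; apply: point_mass_dist. Qed.

Lemma play1_of_pure (sg : K -> bstrat1 R A B) :
  (forall k h, h \in histories -> exists a, sg k h.1 h.2 = point_mass R a) ->
  exists c, forall k hA hB, (hA, hB) \in histories -> play1 c k hA hB = sg k hA hB.
Proof.
move=> pure_sg.
have /choice [f f_sg] : forall kh : K * seq_sub histories,
    exists a, sg kh.1 (val kh.2).1 (val kh.2).2 = point_mass R a.
  by move=> [k h]; apply: pure_sg; apply: valP.
exists [ffun kh => f kh] => k hA hB h_in.
rewrite /play1; case: insubP => [h _ val_h|/negP //].
by rewrite ffunE -(f_sg (k, h)) /= val_h.
Qed.

Lemma cpay_play1 c k (s : bstrat1 R A B) m (t : bstrat2 R A B) :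
  (forall hA hB, (hA, hB) \in histories -> play1 c k hA hB = s hA hB) ->
  cpay m (play1 c k) t T = cpay m s t T.
Proof.
move=> play_s; apply: cont_pay_ext => // hA hB eq_size lt_size.
by apply: play_s; apply: mem_histories; rewrite -?eq_size.
Qed.

Variables (M : K -> L -> A -> B -> R) (p : K -> R) (q : L -> R).

Lemma gammaT_weighted sg ta :
  gammaT p q M T sg ta = \sum_k p k * weighted_pay q (M k) ta T (sg k).
Proof.
apply: eq_bigr => k _; rewrite /weighted_pay big_distrr /=.
by apply: eq_bigr => l _; rewrite mulrA.
Qed.

Lemma gammaT_exchange sg ta :
  gammaT p q M T sg ta = \sum_l q l * \sum_k p k * cpay (M k l) (sg k) (ta l) T.
Proof.
rewrite /gammaT exchange_big /=; apply: eq_bigr => l _; rewrite big_distrr /=.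
by apply: eq_bigr => k _; rewrite mulrCA mulrA.
Qed.

Lemma pure1_improves sg ta : (forall k, 0 <= p k) -> strat1 sg ->
  exists c, gammaT p q M T sg ta <= gammaT p q M T (play1 c) ta.
Proof.
move=> p_ge0 sg_strat.
have /choice [s' s'P] : forall k, exists s', [/\ valid1 s',
    weighted_pay q (M k) ta T (sg k) <= weighted_pay q (M k) ta T s' &
    forall h, h \in histories -> exists a, s' h.1 h.2 = point_mass R a].
  by move=> k; apply: purify.
have [c play_s'] := @play1_of_pure s' (fun k => let: And3 _ _ pure := s'P k in pure).
exists c; rewrite !gammaT_weighted; apply: ler_sum => k _; apply: ler_wpM2l => //.
have [_ le_s' _] := s'P k.
suff -> : weighted_pay q (M k) ta T (play1 c k) = weighted_pay q (M k) ta T (s' k) by [].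
by apply: eq_bigr => l _; rewrite (cpay_play1 _ _ (play_s' k)).
Qed.

Lemma mixed1_realized (x : pure1 -> R) : is_dist x ->
  exists sg, strat1 sg /\ forall ta,
    gammaT p q M T sg ta = \sum_c x c * gammaT p q M T (play1 c) ta.
Proof.
move=> x_dist; pose c0 : pure1 := [ffun => a0].
exists (fun k => kuhn_mix x (fun c => play1 c k) (play1 c0 k)); split.
  by move=> k; apply: kuhn_mix_valid => // c; apply: play1_strat.
move=> ta; rewrite gammaT_weighted.
under [RHS]eq_bigr do rewrite gammaT_weighted.
rewrite [RHS]sum_mul_exchange; apply: eq_bigr => k _; congr (_ * _).
rewrite /weighted_pay [RHS]sum_mul_exchange; apply: eq_bigr => l _; congr (_ * _).
by rewrite kuhn_mix_cpay // => c; apply: play1_strat.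
Qed.

End PureStrategies.

Section Alternative.
Variables (R : realType) (K L A B : finType) (M : K -> L -> A -> B -> R)
  (p : K -> R) (q : L -> R) (T : nat) (a0 : A) (b0 : B).
Hypotheses (p_ge0 : forall k, 0 <= p k) (q_ge0 : forall l, 0 <= q l).

Local Notation gam := (gammaT p q M T).

Definition mirror_payoff : L -> K -> B -> A -> R := fun l k b a => - M k l a b.

Definition play2 (c : pure1 L B A T) : L -> bstrat2 R A B :=
  fun l => swap2 (play1 R b0 c l).

Lemma gammaT_mirror sg ta : gam sg ta =
  - gammaT q p mirror_payoff T (fun l => swap1 (ta l)) (fun k => swap2 (sg k)).
Proof.
rewrite /gammaT exchange_big /= -sumrN; apply: eq_bigr => l _.
rewrite -sumrN; apply: eq_bigr => k _.
by rewrite /cpay cont_payN -cont_pay_swap mulrN opprK [q l * _]mulrC.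
Qed.

Lemma pure2_improves sg ta : strat2 ta -> exists c, gam sg (play2 c) <= gam sg ta.
Proof.
move=> ta_strat.
have [c le_c] := pure1_improves b0 T mirror_payoff p (sg := fun l => swap1 (ta l))
  (fun k => swap2 (sg k)) q_ge0 (fun l => valid1_swap1 (ta_strat l)).
by exists c; rewrite !gammaT_mirror lerN2.
Qed.

Lemma mixed2_realized (y : pure1 L B A T -> R) : is_dist y ->
  exists ta, strat2 ta /\ forall sg, gam sg ta = \sum_c y c * gam sg (play2 c).
Proof.
move=> y_dist; have [sg' [sg'_strat mix]] := mixed1_realized b0 mirror_payoff q p y_dist.
exists (fun l => swap2 (sg' l)); split => [l|sg]; first exact/valid2_swap2/sg'_strat.
rewrite gammaT_mirror mix -sumrN; apply: eq_bigr => c _.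
by rewrite gammaT_mirror mulrN.
Qed.

Theorem gammaT_alternative lam :
  (exists sg, strat1 sg /\ forall ta, strat2 ta -> lam <= gam sg ta) \/
  (exists ta, strat2 ta /\ forall sg, strat1 sg -> gam sg ta < lam).
Proof.
pose G (c1 : pure1 K A B T) (c2 : pure1 L B A T) := gam (play1 R a0 c1) (play2 c2).
case: (ville_alternative G lam [ffun=> b0]) => [[x [x_dist le_x]]|[y [y_dist lt_y]]].
  have [sg [sg_strat mix]] := mixed1_realized a0 M p q x_dist.
  left; exists sg; split => // ta ta_strat.
  have [c le_c] := pure2_improves sg ta_strat.
  by apply: le_trans le_c; rewrite mix; apply: le_x.
have [ta [ta_strat mix]] := mixed2_realized y_dist.
right; exists ta; split => // sg sg_strat.
have [c le_c] := pure1_improves a0 T M q ta p_ge0 sg_strat.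
by apply: le_lt_trans le_c _; rewrite mix; apply: lt_y.
Qed.

End Alternative.

(** * Guarantees and the dual games *)

Local Open Scope classical_set_scope.

Section BoundedSets.
Variable R : realType.
Implicit Types (S : set R) (x c : R).

Lemma lbounded_inf_le S x c : (forall y, S y -> c <= y) -> S x -> inf S <= x.
Proof. by move=> Sc Sx; apply: ge_inf Sx; exists c. Qed.

Lemma ubounded_le_sup S x c : (forall y, S y -> y <= c) -> S x -> x <= sup S.
Proof. by move=> Sc Sx; apply: ub_le_sup Sx; exists c. Qed.

End BoundedSets.

Section Guarantees.
Variables (R : realType) (K L A B : finType) (M : K -> L -> A -> B -> R)
  (p : K -> R) (q : L -> R) (T : nat) (C : R).
Hypotheses (p_dist : is_dist p) (q_dist : is_dist q)
  (M_bound : forall k l a b, `|M k l a b| <= C).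
Variables (sigma_s : K -> bstrat1 R A B) (tau_s : L -> bstrat2 R A B).
Hypotheses (sigma_s_sec : security1 p q M T sigma_s)
  (tau_s_sec : security2 p q M T tau_s).

Local Notation gam := (gammaT p q M T).
Local Notation guar1 := (guar1 p q M T).
Local Notation guar2 := (guar2 p q M T).

Let sigma_s_strat : strat1 sigma_s := proj1 sigma_s_sec.
Let tau_s_strat : strat2 tau_s := proj1 tau_s_sec.

Lemma cpay_bound k l s t : valid1 s -> valid2 t -> `|cpay (M k l) s t T| <= T%:R * C.
Proof. by move=> vs vt; apply: cont_pay_bound. Qed.

Lemma weighted_pay_bound k s ta : valid1 s -> strat2 ta ->
  `|weighted_pay q (M k) ta T s| <= T%:R * C.
Proof. by move=> vs ta_strat; apply: norm_avg_le => // l; apply: cpay_bound. Qed.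

Lemma type_pay_bound l sg t : strat1 sg -> valid2 t ->
  `|\sum_k p k * cpay (M k l) (sg k) t T| <= T%:R * C.
Proof. by move=> sg_strat vt; apply: norm_avg_le => // k; apply: cpay_bound. Qed.

Lemma gammaT_bound sg ta : strat1 sg -> strat2 ta -> `|gam sg ta| <= T%:R * C.
Proof.
move=> sg_strat ta_strat; rewrite gammaT_weighted.
by apply: norm_avg_le => // k; apply: weighted_pay_bound.
Qed.

Lemma guar1_le sg ta : strat1 sg -> strat2 ta -> guar1 sg <= gam sg ta.
Proof.
move=> sg_strat ta_strat; apply: (lbounded_inf_le (c := - (T%:R * C))); last by exists ta.
by move=> _ [t [t_strat ->]]; apply/lerNnormlW/gammaT_bound.
Qed.

Lemma gammaT_le_guar2 sg ta : strat1 sg -> strat2 ta -> gam sg ta <= guar2 ta.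
Proof.
move=> sg_strat ta_strat; apply: (ubounded_le_sup (c := T%:R * C)); last by exists sg.
by move=> _ [s [s_strat ->]]; apply/ler_normlW/gammaT_bound.
Qed.

Lemma le_guar1 sg lam : (forall ta, strat2 ta -> lam <= gam sg ta) -> lam <= guar1 sg.
Proof.
move=> le_lam; apply: lb_le_inf => [|_ [t [t_strat ->]]]; last exact: le_lam.
by exists (gam sg tau_s), tau_s.
Qed.

Lemma guar2_le ta lam : (forall sg, strat1 sg -> gam sg ta <= lam) -> guar2 ta <= lam.
Proof.
move=> le_lam; apply: ge_sup => [|_ [s [s_strat ->]]]; last exact: le_lam.
by exists (gam sigma_s ta), sigma_s.
Qed.

Lemma guar1_le_security sg : strat1 sg -> guar1 sg <= guar1 sigma_s.
Proof.
move=> sg_strat; rewrite (proj2 sigma_s_sec).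
apply: (ubounded_le_sup (c := T%:R * C)); last by exists sg.
move=> _ [s [s_strat ->]]; apply: le_trans (guar1_le s_strat tau_s_strat) _.
exact/ler_normlW/gammaT_bound.
Qed.

Lemma guar2_security_le ta : strat2 ta -> guar2 tau_s <= guar2 ta.
Proof.
move=> ta_strat; rewrite (proj2 tau_s_sec).
apply: (lbounded_inf_le (c := - (T%:R * C))); last by exists ta.
move=> _ [t [t_strat ->]]; apply: le_trans (gammaT_le_guar2 sigma_s_strat t_strat).
exact/lerNnormlW/gammaT_bound.
Qed.

Lemma guar2_le_guar1 : guar2 tau_s <= guar1 sigma_s.
Proof.
have [k0] := sum_eq1_inhabited (proj2 p_dist).
have [a0] := sum_eq1_inhabited (proj2 (sigma_s_strat k0 [::] [::])).
have [l0] := sum_eq1_inhabited (proj2 q_dist).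
have [b0] := sum_eq1_inhabited (proj2 (tau_s_strat l0 [::] [::])).
rewrite leNgt; apply/negP => lt_guar.
pose lam := (guar1 sigma_s + guar2 tau_s) / 2.
have [[sg [sg_strat le_lam]]|[ta [ta_strat lt_lam]]] :=
  gammaT_alternative M T a0 b0 (proj1 p_dist) (proj1 q_dist) lam.
  have := le_trans (le_guar1 le_lam) (guar1_le_security sg_strat); rewrite /lam; lra.
have := guar2_le (fun sg sg_strat => ltW (lt_lam sg sg_strat)).
move/(le_trans (guar2_security_le ta_strat)).
rewrite /lam; lra.
Qed.

Lemma w_k0_approx k e : 0 < e ->
  exists s, valid1 s /\ w_k0 q M T tau_s k - e < weighted_pay q (M k) tau_s T s.
Proof.
move=> e_gt0; rewrite /w_k0; set S := [set r | _].
have S_sup : has_sup S.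
  split; first by exists (weighted_pay q (M k) tau_s T (sigma_s k)), (sigma_s k).
  by exists (T%:R * C) => _ [s [vs ->]]; apply/ler_normlW/weighted_pay_bound.
by have [_ [s [vs ->]] lt_e] := sup_adherent e_gt0 S_sup; exists s.
Qed.

Lemma u_l0_approx l e : 0 < e ->
  exists t, valid2 t /\
    \sum_k p k * cpay (M k l) (sigma_s k) t T < u_l0 p M T sigma_s l + e.
Proof.
move=> e_gt0; rewrite /u_l0; set S := [set r | _].
have S_inf : has_inf S.
  split; first by exists (\sum_k p k * cpay (M k l) (sigma_s k) (tau_s l) T), (tau_s l).
  by exists (- (T%:R * C)) => _ [t [vt ->]]; apply/lerNnormlW/type_pay_bound.
by have [_ [t [vt ->]] lt_e] := inf_adherent e_gt0 S_inf; exists t.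
Qed.

Lemma sum_w_k0_le_guar2 : \sum_k p k * w_k0 q M T tau_s k <= guar2 tau_s.
Proof.
apply/ler_addgt0Pr => e e_gt0; rewrite -lerBlDr addrC.
have /choice [s s_approx] := fun k => w_k0_approx k e_gt0.
have s_strat : strat1 s by move=> k; case: (s_approx k).
apply: le_trans (gammaT_le_guar2 s_strat tau_s_strat); rewrite gammaT_weighted.
rewrite -sum_dist_affine ?(proj2 p_dist) //; apply: ler_sum => k _.
by rewrite ler_wpM2l ?(proj1 p_dist) // addrC ltW //; case: (s_approx k).
Qed.

Lemma guar1_le_sum_u_l0 : guar1 sigma_s <= \sum_l q l * u_l0 p M T sigma_s l.
Proof.
apply/ler_addgt0Pr => e e_gt0.
have /choice [t t_approx] := fun l => u_l0_approx l e_gt0.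
have t_strat : strat2 t by move=> l; case: (t_approx l).
apply: le_trans (guar1_le sigma_s_strat t_strat) _; rewrite gammaT_exchange.
rewrite addrC -sum_dist_affine ?(proj2 q_dist) //; apply: ler_sum => l _.
by rewrite ler_wpM2l ?(proj1 q_dist) // addrC ltW //; case: (t_approx l).
Qed.

Lemma pay_dual1_bound mu Cmu pi sg ta : (forall k, `|mu k| <= Cmu) ->
  is_dist pi -> strat1 sg -> strat2 ta ->
  `|pay_dual1 mu q M T pi sg ta| <= Cmu + T%:R * C.
Proof.
move=> muC pi_dist sg_strat ta_strat; apply: norm_avg_le => // k.
apply: le_trans (ler_normD _ _) (lerD (muC k) _).
exact: weighted_pay_bound (sg_strat k) ta_strat.
Qed.

Lemma pay_dual2_bound nu Cnu sg rho ta : (forall l, `|nu l| <= Cnu) ->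
  strat1 sg -> is_dist rho -> strat2 ta ->
  `|pay_dual2 p nu M T sg rho ta| <= Cnu + T%:R * C.
Proof.
move=> nuC sg_strat rho_dist ta_strat; apply: norm_avg_le => // l.
apply: le_trans (ler_normD _ _) (lerD (nuC l) _).
exact: type_pay_bound sg_strat (ta_strat l).
Qed.

Lemma inf_pay_dual1_le mu pi sg ta : is_dist pi -> strat1 sg -> strat2 ta ->
  inf [set g | exists t, strat2 t /\ g = pay_dual1 mu q M T pi sg t]
    <= pay_dual1 mu q M T pi sg ta.
Proof.
move=> pi_dist sg_strat ta_strat; have [Cmu muC] := finite_bounded mu.
apply: (lbounded_inf_le (c := - (Cmu + T%:R * C))); last by exists ta.
by move=> _ [t [t_strat ->]]; apply/lerNnormlW/pay_dual1_bound.
Qed.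

Lemma inf_pay_dual2_le nu sg rho ta : strat1 sg -> is_dist rho -> strat2 ta ->
  inf [set g | exists r t, is_dist r /\ strat2 t /\ g = pay_dual2 p nu M T sg r t]
    <= pay_dual2 p nu M T sg rho ta.
Proof.
move=> sg_strat rho_dist ta_strat; have [Cnu nuC] := finite_bounded nu.
apply: (lbounded_inf_le (c := - (Cnu + T%:R * C))); last by exists rho, ta.
by move=> _ [r [t [r_dist [t_strat ->]]]]; apply/lerNnormlW/pay_dual2_bound.
Qed.

Lemma pay_dual1_prior mu sg ta :
  pay_dual1 mu q M T p sg ta = \sum_k p k * mu k + gam sg ta.
Proof.
by rewrite /pay_dual1 gammaT_weighted -big_split; apply: eq_bigr => k _; rewrite mulrDr.
Qed.

Lemma pay_dual2_prior nu sg ta :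
  pay_dual2 p nu M T sg q ta = \sum_l q l * nu l + gam sg ta.
Proof.
by rewrite /pay_dual2 gammaT_exchange -big_split; apply: eq_bigr => l _; rewrite mulrDr.
Qed.

Lemma Vdual1_neg_w_k0_le0 : Vdual1 (fun k => - w_k0 q M T tau_s k) q M T <= 0.
Proof.
apply: ge_sup => [|_ [pi [sg [pi_dist [sg_strat ->]]]]].
  by exists (inf [set g | exists t, strat2 t /\
    g = pay_dual1 (fun k => - w_k0 q M T tau_s k) q M T p sigma_s t]), p, sigma_s.
apply: le_trans (inf_pay_dual1_le _ pi_dist sg_strat tau_s_strat) _.
apply: sumr_le0 => k _; rewrite mulr_ge0_le0 ?(proj1 pi_dist) // addrC subr_le0.
apply: (ubounded_le_sup (c := T%:R * C)); last by exists (sg k).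
by move=> _ [s [vs ->]]; apply/ler_normlW/weighted_pay_bound.
Qed.

Lemma guar1_le_Vdual1 mu : \sum_k p k * mu k + guar1 sigma_s <= Vdual1 mu q M T.
Proof.
have [Cmu muC] := finite_bounded mu.
apply: (@le_trans _ _ (inf [set g | exists t, strat2 t /\
    g = pay_dual1 mu q M T p sigma_s t])).
  apply: lb_le_inf => [|_ [t [t_strat ->]]].
    by exists (pay_dual1 mu q M T p sigma_s tau_s), tau_s.
  by rewrite pay_dual1_prior lerD2l guar1_le.
apply: (ubounded_le_sup (c := Cmu + T%:R * C)); last by exists p, sigma_s.
move=> _ [pi [sg [pi_dist [sg_strat ->]]]].
apply: le_trans (inf_pay_dual1_le _ pi_dist sg_strat tau_s_strat) _.
exact/ler_normlW/pay_dual1_bound.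
Qed.

Lemma Vdual2_neg_u_l0_ge0 : 0 <= Vdual2 p (fun l => - u_l0 p M T sigma_s l) M T.
Proof.
set nu := fun l => _; have [Cnu nuC] := finite_bounded nu.
apply: (@le_trans _ _ (inf [set g | exists r t, is_dist r /\ strat2 t /\
    g = pay_dual2 p nu M T sigma_s r t])).
  apply: lb_le_inf => [|_ [rho [ta [rho_dist [ta_strat ->]]]]].
    by exists (pay_dual2 p nu M T sigma_s q tau_s), q, tau_s.
  apply: sumr_ge0 => l _; rewrite mulr_ge0 ?(proj1 rho_dist) // addrC subr_ge0.
  apply: (lbounded_inf_le (c := - (T%:R * C))); last by exists (ta l).
  by move=> _ [t [vt ->]]; apply/lerNnormlW/type_pay_bound.
apply: (ubounded_le_sup (c := Cnu + T%:R * C)); last by exists sigma_s.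
move=> _ [sg [sg_strat ->]].
apply: le_trans (inf_pay_dual2_le _ sg_strat q_dist tau_s_strat) _.
exact/ler_normlW/pay_dual2_bound.
Qed.

Lemma Vdual2_le_guar2 nu : Vdual2 p nu M T <= \sum_l q l * nu l + guar2 tau_s.
Proof.
apply: ge_sup => [|_ [sg [sg_strat ->]]].
  by exists (inf [set g | exists r t, is_dist r /\ strat2 t /\
    g = pay_dual2 p nu M T sigma_s r t]), sigma_s.
apply: le_trans (inf_pay_dual2_le _ sg_strat q_dist tau_s_strat) _.
by rewrite pay_dual2_prior lerD2l gammaT_le_guar2.
Qed.

End Guarantees.

Theorem lemma2 (R : realType) (K L A B : finType)
    (M : K -> L -> A -> B -> R) (p : K -> R) (q : L -> R) (T : nat)
    (hp : is_dist p) (hp_pos : forall k, 0 < p k)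
    (hq : is_dist q) (hq_pos : forall l, 0 < q l)
    (sigma_s : K -> bstrat1 R A B) (tau_s : L -> bstrat2 R A B)
    (hsig : security1 p q M T sigma_s) (htau : security2 p q M T tau_s) :
  let mu_s : K -> R := fun k => - w_k0 q M T tau_s k in
  let nu_s : L -> R := fun l => - u_l0 p M T sigma_s l in
  (forall mu : K -> R,
     Vdual1 mu_s q M T - \sum_(k : K) p k * mu_s k
       <= Vdual1 mu q M T - \sum_(k : K) p k * mu k) /\
  (forall nu : L -> R,
     Vdual2 p nu M T - \sum_(l : L) q l * nu l
       <= Vdual2 p nu_s M T - \sum_(l : L) q l * nu_s l).
Proof.
have [C M_bound] : exists C, forall k l a b, `|M k l a b| <= C.
  have [C MC] := finite_bounded (fun x : K * L * A * B => M x.1.1.1 x.1.1.2 x.1.2 x.2).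
  by exists C => k l a b; apply: (MC (k, l, a, b)).
have minimax := guar2_le_guar1 hp hq M_bound hsig htau.
move=> mu_s nu_s; split=> [mu|nu].
  have -> : \sum_k p k * mu_s k = - \sum_k p k * w_k0 q M T tau_s k.
    by rewrite -sumrN; apply: eq_bigr => k _; rewrite mulrN.
  have := Vdual1_neg_w_k0_le0 hp hq M_bound hsig htau.
  have := sum_w_k0_le_guar2 hp hq M_bound hsig htau.
  have := guar1_le_Vdual1 hp hq M_bound hsig htau mu.
  lra.
have -> : \sum_l q l * nu_s l = - \sum_l q l * u_l0 p M T sigma_s l.
  by rewrite -sumrN; apply: eq_bigr => l _; rewrite mulrN.
have := Vdual2_neg_u_l0_ge0 hp hq M_bound hsig htau.
have := guar1_le_sum_u_l0 hp hq M_bound hsig htau.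
have := Vdual2_le_guar2 hp hq M_bound hsig htau nu.
lra.
Qed.
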